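(* Let $g=(g_0,g_1,g_2,g_3)\in\mathbb{R}^4$ with $g_0<g_2$ and $g_1<g_3$ be a fixed ground-truth box, and let $L_i\le U_i$ ($i=0,1,2,3$) be real numbers with $L_2>0$ and $L_3>0$. Consider the problem of maximising $\mathrm{IoU}(\mathbf z,g)$ over $\mathbf z=(z_0,z_1,z_2,z_3)\in\mathbb{R}^4$ subject to the constraints $$L_0\le z_0+z_2\le U_0,\qquad L_1\le z_1+z_3\le U_1,\qquad L_2\le z_2-z_0\le U_2,\qquad L_3\le z_3-z_1\le U_3,$$ and let $F$ denote the set of $\mathbf z$ satisfying these constraints. Define the finite sets of planar points $$P^c_x=\Big\{\big(\tfrac{U_0-U_2}{2},\tfrac{U_0+U_2}{2}\big),\big(\tfrac{U_0-L_2}{2},\tfrac{U_0+L_2}{2}\big),\big(\tfrac{L_0-U_2}{2},\tfrac{L_0+U_2}{2}\big),\big(\tfrac{L_0-L_2}{2},\tfrac{L_0+L_2}{2}\big)\Big\},$$ $$P^c_y=\Big\{\big(\tfrac{U_1-U_3}{2},\tfrac{U_1+U_3}{2}\big),\big(\tfrac{U_1-L_3}{2},\tfrac{U_1+L_3}{2}\big),\big(\tfrac{L_1-U_3}{2},\tfrac{L_1+U_3}{2}\big),\big(\tfrac{L_1-L_3}{2},\tfrac{L_1+L_3}{2}\big)\Big\},$$ $$P^{\mathrm{int}}_x=\{(g_0,U_0-g_0),(g_0,L_0-g_0),(g_0,U_2+g_0),(g_0,L_2+g_0),(U_0-g_2,g_2),(L_0-g_2,g_2),(g_2-U_2,g_2),(g_2-L_2,g_2)\},$$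 $$P^{\mathrm{int}}_y=\{(g_1,U_1-g_1),(g_1,L_1-g_1),(g_1,U_3+g_1),(g_1,L_3+g_1),(U_1-g_3,g_3),(L_1-g_3,g_3),(g_3-U_3,g_3),(g_3-L_3,g_3)\},$$ $P^{gt}_x=\{(g_0,g_2)\}$, $P^{gt}_y=\{(g_1,g_3)\}$, and $P_x=P^c_x\cup P^{\mathrm{int}}_x\cup P^{gt}_x$, $P_y=P^c_y\cup P^{\mathrm{int}}_y\cup P^{gt}_y$. Let $P_{z_0}=\{\alpha:(\alpha,\beta)\in P_x\text{ for some }\beta\}$, $P_{z_2}=\{\beta:(\alpha,\beta)\in P_x\text{ for some }\alpha\}$, $P_{z_1}=\{\alpha:(\alpha,\beta)\in P_y\text{ for some }\beta\}$, $P_{z_3}=\{\beta:(\alpha,\beta)\in P_y\text{ for some }\alpha\}$, and $C_s=P_{z_0}\times P_{z_1}\times P_{z_2}\times P_{z_3}$ (a point $(z_0,z_1,z_2,z_3)$ lies in $C_s$ iff $z_i\in P_{z_i}$ for each $i$). Then the maximum of $\mathrm{IoU}(\mathbf z,g)$ over $F$ is attained at a point of $C_s$: if $\mathbf z^*\in F$ maximises $\mathrm{IoU}(\cdot,g)$ over $F$, then there exists $\mathbf z'\in C_s\cap F$ with $\mathrm{IoU}(\mathbf z',g)=\mathrm{IoU}(\mathbf z^*,g)$.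
   Context: Boxes are in corner format $b=(b_0,b_1,b_2,b_3)$ with top-left corner $(b_0,b_1)$ and bottom-right corner $(b_2,b_3)$. The area of a box is $\mathbf a(b)=(b_3-b_1)(b_2-b_0)$. The intersection of boxes $b,b'$ is $\mathbf i(b,b')=(\max(b_0,b'_0),\max(b_1,b'_1),\min(b_2,b'_2),\min(b_3,b'_3))$, and $\mathrm{IoU}(b,b')=\mathbf a(\mathbf i(b,b'))/\big(\mathbf a(b)+\mathbf a(b')-\mathbf a(\mathbf i(b,b'))\big)$. In the paper's setting the constraint bounds arise from interval bounds on predicted box centres ($z_0+z_2$, $z_1+z_3$ equal twice the centre coordinates) and on predicted widths and heights ($z_2-z_0$, $z_3-z_1$), which are positive. *)

From Stdlib Require Import Reals List.
Import ListNotations.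
Open Scope R_scope.

(* A box in corner format b = (b0,b1,b2,b3): top-left (b0,b1), bottom-right (b2,b3). *)
Record box := mkbox { b0 : R; b1 : R; b2 : R; b3 : R }.

Definition area (b : box) : R := (b3 b - b1 b) * (b2 b - b0 b).

Definition inter (b b' : box) : box :=
  mkbox (Rmax (b0 b) (b0 b')) (Rmax (b1 b) (b1 b'))
        (Rmin (b2 b) (b2 b')) (Rmin (b3 b) (b3 b')).

Definition IoU (b b' : box) : R :=
  area (inter b b') / (area b + area b' - area (inter b b')).

Definition inF (L U : box) (z : box) : Prop :=
  b0 L <= b0 z + b2 z <= b0 U /\
  b1 L <= b1 z + b3 z <= b1 U /\
  b2 L <= b2 z - b0 z <= b2 U /\
  b3 L <= b3 z - b1 z <= b3 U.

(* Candidate point sets, for one axis: lo/hi bounds on the centre sum (Lc,Uc),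
   on the size (Ls,Us), and the ground-truth coordinates (ga, gb). *)
Definition Pc (Lc Uc Ls Us : R) : list (R * R) :=
  [ ((Uc - Us) / 2, (Uc + Us) / 2);
    ((Uc - Ls) / 2, (Uc + Ls) / 2);
    ((Lc - Us) / 2, (Lc + Us) / 2);
    ((Lc - Ls) / 2, (Lc + Ls) / 2) ].

Definition Pint (Lc Uc Ls Us ga gb : R) : list (R * R) :=
  [ (ga, Uc - ga); (ga, Lc - ga); (ga, Us + ga); (ga, Ls + ga);
    (Uc - gb, gb); (Lc - gb, gb); (gb - Us, gb); (gb - Ls, gb) ].

Definition Pgt (ga gb : R) : list (R * R) := [ (ga, gb) ].

Definition Paxis (Lc Uc Ls Us ga gb : R) : list (R * R) :=
  Pc Lc Uc Ls Us ++ Pint Lc Uc Ls Us ga gb ++ Pgt ga gb.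

Definition Px (L U g : box) : list (R * R) :=
  Paxis (b0 L) (b0 U) (b2 L) (b2 U) (b0 g) (b2 g).
Definition Py (L U g : box) : list (R * R) :=
  Paxis (b1 L) (b1 U) (b3 L) (b3 U) (b1 g) (b3 g).

Definition inCs (L U g : box) (z : box) : Prop :=
  In (b0 z) (map fst (Px L U g)) /\
  In (b1 z) (map fst (Py L U g)) /\
  In (b2 z) (map snd (Px L U g)) /\
  In (b3 z) (map snd (Py L U g)).

From Stdlib Require Import Reals Lra List.
Open Scope R_scope.

(* IoU z g = I / (S - I) = odds (I / S), where I is the (signed) intersection area,
   S = area z + area g > 0 and odds x = x / (1 - x).  Fix the vertical coordinates
   of z.  Along a line of the (z0, z2)-plane, S is affine and I is affine between the
   kinks where z0 crosses g0 or z2 crosses g2, so there I / S is monotone.  As odds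
   is increasing on both sides of its pole at 1 (where division by zero makes it 0),
   a maximum of IoU on such a piece is also attained at an end of the piece.  Sliding
   a maximiser along the diagonal until it meets an edge of the centre constraint or
   a kink line, and then along that line, therefore reaches a point of P_x with the
   same IoU.  The same argument in transposed coordinates handles (z1, z3). *)

Definition odds (x : R) : R := x / (1 - x).

Lemma odds_1 : odds 1 = 0.
Proof. unfold odds. rewrite Rminus_diag. apply Rdiv_0_r. Qed.

Lemma odds_le (x y : R) : x <= y -> y < 1 \/ 1 < x -> odds x <= odds y.
Proof.
  intros Hxy Hside.
  assert (Hd : 0 < (1 - x) * (1 - y)) by (destruct Hside; nra).
  assert (E : odds y - odds x = (y - x) / ((1 - x) * (1 - y)))
    by (unfold odds; field; split; nra).
  assert (0 <= (y - x) / ((1 - x) * (1 - y))).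
  { unfold Rdiv. apply Rmult_le_pos; [lra|]. apply Rlt_le, Rinv_0_lt_compat, Hd. }
  lra.
Qed.

Lemma odds_neg (x : R) : 1 < x -> odds x < 0.
Proof. intros Hx. apply Rdiv_pos_neg; lra. Qed.

Lemma odds_unbounded (c M : R) : c < 1 -> exists y, c <= y < 1 /\ M < odds y.
Proof.
  intros Hc.
  set (m := Rabs M + 1).
  assert (Hm : 0 < m) by (unfold m; pose proof (Rabs_pos M); lra).
  assert (Hodds : odds (m / (m + 1)) = m) by (unfold odds; field; lra).
  assert (Hlt : m / (m + 1) < 1).
  { assert (m / (m + 1) = 1 - 1 / (m + 1)) by (field; lra).
    assert (0 < 1 / (m + 1)) by (apply Rdiv_lt_0_compat; lra). lra. }
  exists (Rmax c (m / (m + 1))).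
  pose proof (Rmax_l c (m / (m + 1))). pose proof (Rmax_r c (m / (m + 1))).
  assert (Rmax c (m / (m + 1)) < 1) by (apply Rmax_lub_lt; lra).
  split; [lra|].
  pose proof (odds_le (m / (m + 1)) (Rmax c (m / (m + 1))) ltac:(lra) ltac:(lra)).
  pose proof (Rle_abs M). unfold m in *. lra.
Qed.

Lemma odds_max_at_end (c d x : R) : c <= x <= d ->
  (forall y, c <= y <= d -> odds y <= odds x) -> odds x = odds c \/ odds x = odds d.
Proof.
  intros Hx Hmax.
  destruct (Rlt_le_dec d 1) as [Hd|Hd].
  { right. apply Rle_antisym; [apply odds_le|apply Hmax]; lra. }
  destruct (Rlt_le_dec 1 c) as [Hc|Hc].
  { right. apply Rle_antisym; [apply odds_le|apply Hmax]; lra. }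
  destruct (Req_dec c 1) as [Hc1|Hc1].
  - left. subst c. apply Rle_antisym; [|apply Hmax; lra].
    rewrite odds_1. destruct (Req_dec x 1) as [->|Hx1].
    + rewrite odds_1. lra.
    + apply Rlt_le, odds_neg. lra.
  - exfalso. destruct (odds_unbounded c (odds x)) as [y [Hy Hlt]]; [lra|].
    specialize (Hmax y ltac:(lra)). lra.
Qed.

Lemma affine_root (c0 c1 a b : R) : a <= b -> (c0 + c1 * a) * (c0 + c1 * b) <= 0 ->
  exists t, a <= t <= b /\ c0 + c1 * t = 0.
Proof.
  intros Hab Hsign.
  destruct (Req_dec c1 0) as [->|Hc1].
  - exists a. split; nra.
  - exists (- c0 / c1).
    assert (E : forall t, c0 + c1 * t = c1 * (t - - c0 / c1)) by (intro; field; exact Hc1).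
    rewrite !E in Hsign.
    assert (Hsq : 0 < c1 * c1) by nra.
    assert ((a - - c0 / c1) * (b - - c0 / c1) <= 0) by nra.
    split; [split; nra|]. rewrite E. ring.
Qed.

Definition affine_on (f : R -> R) (a b : R) : Prop :=
  exists c0 c1, forall t, a <= t <= b -> f t = c0 + c1 * t.

Section AffineRatio.

Variables (N S : R -> R) (a b : R).
Hypotheses (HN : affine_on N a b) (HS : affine_on S a b)
  (HSpos : forall t, a <= t <= b -> 0 < S t).

Lemma affine_ratio_monotone :
  (forall t u, a <= t -> t <= u -> u <= b -> N t / S t <= N u / S u) \/
  (forall t u, a <= t -> t <= u -> u <= b -> N u / S u <= N t / S t).
Proof.
  destruct HN as [n0 [n1 EN]], HS as [s0 [s1 ES]].
  assert (Hdiff : forall t u, a <= t -> t <= u -> u <= b ->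
    N u / S u - N t / S t = (u - t) * (n1 * s0 - n0 * s1) / (S t * S u)).
  { intros t u Ht Htu Hu.
    assert (0 < S t) by (apply HSpos; lra). assert (0 < S u) by (apply HSpos; lra).
    rewrite (EN t), (EN u), (ES t), (ES u) in * by lra. field. lra. }
  destruct (Rle_dec 0 (n1 * s0 - n0 * s1)) as [HW|HW]; [left|right];
    intros t u Ht Htu Hu; specialize (Hdiff t u Ht Htu Hu);
    assert (Hinv : 0 < / (S t * S u))
      by (apply Rinv_0_lt_compat, Rmult_lt_0_compat; apply HSpos; lra);
    unfold Rdiv in Hdiff.
  - assert (0 <= (u - t) * (n1 * s0 - n0 * s1)) by nra. nra.
  - assert ((u - t) * (n1 * s0 - n0 * s1) <= 0) by nra. nra.
Qed.

Lemma affine_ratio_onto (y : R) : a <= b ->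
  (N a / S a - y) * (N b / S b - y) <= 0 -> exists t, a <= t <= b /\ N t / S t = y.
Proof.
  intros Hab Hy.
  destruct HN as [n0 [n1 EN]], HS as [s0 [s1 ES]].
  assert (Ha : 0 < S a) by (apply HSpos; lra). assert (Hb : 0 < S b) by (apply HSpos; lra).
  assert (Hroot : forall t, a <= t <= b ->
    (n0 - y * s0) + (n1 - y * s1) * t = S t * (N t / S t - y)).
  { intros t Ht. assert (0 < S t) by (apply HSpos; lra).
    rewrite (EN t), (ES t) in * by lra. field. lra. }
  destruct (affine_root (n0 - y * s0) (n1 - y * s1) a b Hab) as [t [Ht Hzero]].
  - rewrite (Hroot a), (Hroot b) by lra.
    replace (S a * (N a / S a - y) * (S b * (N b / S b - y)))
      with ((S a * S b) * ((N a / S a - y) * (N b / S b - y))) by ring.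
    assert (0 < S a * S b) by (apply Rmult_lt_0_compat; lra). nra.
  - exists t. split; [exact Ht|].
    rewrite Hroot in Hzero by exact Ht.
    assert (0 < S t) by (apply HSpos; lra). nra.
Qed.

Lemma affine_ratio_odds_max_at_end (ts : R) : a <= ts <= b ->
  (forall t, a <= t <= b -> odds (N t / S t) <= odds (N ts / S ts)) ->
  odds (N a / S a) = odds (N ts / S ts) \/ odds (N b / S b) = odds (N ts / S ts).
Proof.
  intros Hts Hmax.
  assert (Hodds : forall c d, c <= N ts / S ts <= d ->
    (forall y, c <= y <= d -> exists t, a <= t <= b /\ N t / S t = y) ->
    odds (N ts / S ts) = odds c \/ odds (N ts / S ts) = odds d).
  { intros c d Hcd Honto. apply odds_max_at_end; [exact Hcd|].
    intros y Hy. destruct (Honto y Hy) as [t [Ht <-]]. apply Hmax, Ht. }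
  destruct affine_ratio_monotone as [Hmono|Hmono].
  - assert (Hrange : N a / S a <= N ts / S ts <= N b / S b) by (split; apply Hmono; lra).
    assert (Honto : forall y, N a / S a <= y <= N b / S b ->
                      exists t, a <= t <= b /\ N t / S t = y)
      by (intros y Hy; apply affine_ratio_onto; [lra|nra]).
    destruct (Hodds _ _ Hrange Honto) as [E|E]; [left|right]; symmetry; exact E.
  - assert (Hrange : N b / S b <= N ts / S ts <= N a / S a) by (split; apply Hmono; lra).
    assert (Honto : forall y, N b / S b <= y <= N a / S a ->
                      exists t, a <= t <= b /\ N t / S t = y)
      by (intros y Hy; apply affine_ratio_onto; [lra|nra]).
    destruct (Hodds _ _ Hrange Honto) as [E|E]; [right|left]; symmetry; exact E.
Qed.

End AffineRatio.

Definition sign_constant (f : R -> R) (u v : R) : Prop :=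
  (forall t, u <= t <= v -> f t <= 0) \/ (forall t, u <= t <= v -> 0 <= f t).

Lemma Rmax_or (x y : R) : Rmax x y = x \/ Rmax x y = y.
Proof. apply Rmax_case; auto. Qed.

Lemma Rmin_or (x y : R) : Rmin x y = x \/ Rmin x y = y.
Proof. apply Rmin_case; auto. Qed.

Lemma affine_sign_split (c0 c1 a b ts : R) : a <= ts <= b ->
  exists u v, a <= u <= ts /\ ts <= v <= b /\
    (u = a \/ (c1 <> 0 /\ c0 + c1 * u = 0)) /\
    (v = b \/ (c1 <> 0 /\ c0 + c1 * v = 0)) /\
    sign_constant (fun t => c0 + c1 * t) u v.
Proof.
  intros Hts.
  destruct (Req_dec c1 0) as [->|Hc1].
  { exists a, b. do 4 (split; [lra || auto|]).
    destruct (Rle_dec c0 0); [left|right]; intros; lra. }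
  set (r := - c0 / c1).
  assert (Er : forall t, c0 + c1 * t = c1 * (t - r)) by (intro; unfold r; field; exact Hc1).
  assert (Hr : c0 + c1 * r = 0) by (rewrite Er; ring).
  assert (Hside : forall u v, r <= u \/ v <= r -> sign_constant (fun t => c0 + c1 * t) u v).
  { intros u v Huv.
    destruct (Rlt_le_dec 0 c1), Huv; [right|left|left|right]; intros t Ht; rewrite Er; nra. }
  destruct (Rle_dec r ts).
  - exists (Rmax a r), b.
    pose proof (Rmax_l a r). pose proof (Rmax_r a r).
    assert (Rmax a r <= ts) by (apply Rmax_lub; lra).
    repeat split; try lra.
    + destruct (Rmax_or a r) as [E|E]; rewrite E; auto.
    + apply Hside. lra.
  - exists a, (Rmin b r).
    pose proof (Rmin_l b r). pose proof (Rmin_r b r).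
    assert (ts <= Rmin b r) by (apply Rmin_glb; lra).
    repeat split; try lra.
    + destruct (Rmin_or b r) as [E|E]; rewrite E; auto.
    + apply Hside. lra.
Qed.

Lemma affine_sign_split2 (c0 c1 d0 d1 a b ts : R) : a <= ts <= b ->
  exists u v, a <= u <= ts /\ ts <= v <= b /\
    sign_constant (fun t => c0 + c1 * t) u v /\ sign_constant (fun t => d0 + d1 * t) u v /\
    forall e, e = u \/ e = v ->
      e = a \/ e = b \/ (c1 <> 0 /\ c0 + c1 * e = 0) \/ (d1 <> 0 /\ d0 + d1 * e = 0).
Proof.
  intros Hts.
  destruct (affine_sign_split c0 c1 a b ts Hts) as [u1 [v1 [Hu1 [Hv1 [Eu1 [Ev1 Hc]]]]]].
  destruct (affine_sign_split d0 d1 u1 v1 ts ltac:(lra)) as [u [v [Hu [Hv [Eu [Ev Hd]]]]]].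
  exists u, v. split; [lra|split; [lra|split; [|split; [exact Hd|]]]].
  - destruct Hc as [Hc|Hc]; [left|right]; intros t Ht; apply Hc; lra.
  - intros e [->| ->]; [destruct Eu as [->|]; [destruct Eu1 as [->|]|]
                      |destruct Ev as [->|]; [destruct Ev1 as [->|]|]]; tauto.
Qed.

Lemma overlap_affine (ga gb p0 dp q0 dq u v : R) :
  sign_constant (fun t => (p0 - ga) + dp * t) u v ->
  sign_constant (fun t => (q0 - gb) + dq * t) u v ->
  affine_on (fun t => Rmin (q0 + dq * t) gb - Rmax (p0 + dp * t) ga) u v.
Proof.
  intros [Hp|Hp] [Hq|Hq]; [exists (q0 - ga), dq | exists (gb - ga), 0
    | exists (q0 - p0), (dq - dp) | exists (gb - p0), (- dp)];
    intros t Ht; specialize (Hp t Ht); specialize (Hq t Ht);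
    [rewrite Rmin_left, Rmax_right | rewrite Rmin_right, Rmax_right
    | rewrite Rmin_left, Rmax_left | rewrite Rmin_right, Rmax_left]; lra.
Qed.

Lemma IoU_odds (z g : box) : 0 < area z + area g ->
  IoU z g = odds (area (inter z g) / (area z + area g)).
Proof.
  intros HS. unfold IoU, odds.
  destruct (Req_dec (area z + area g - area (inter z g)) 0) as [E|E].
  - replace (1 - area (inter z g) / (area z + area g)) with 0 by (field_simplify_eq; lra).
    rewrite E, !Rdiv_0_r. reflexivity.
  - field. lra.
Qed.

Lemma IoU_segment_max (g : box) (y1 y3 p0 dp q0 dq a b ts : R) :
  0 < area g -> y1 <= y3 ->
  (forall t, a <= t <= b -> p0 + dp * t <= q0 + dq * t) ->
  a <= ts <= b ->
  (forall t, a <= t <= b -> IoU (mkbox (p0 + dp * t) y1 (q0 + dq * t) y3) g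
                            <= IoU (mkbox (p0 + dp * ts) y1 (q0 + dq * ts) y3) g) ->
  exists e, a <= e <= b /\
    IoU (mkbox (p0 + dp * e) y1 (q0 + dq * e) y3) g
      = IoU (mkbox (p0 + dp * ts) y1 (q0 + dq * ts) y3) g /\
    (e = a \/ e = b \/ (dp <> 0 /\ p0 + dp * e = b0 g) \/ (dq <> 0 /\ q0 + dq * e = b2 g)).
Proof.
  intros Hg Hy Hw Hts Hmax.
  set (z := fun t => mkbox (p0 + dp * t) y1 (q0 + dq * t) y3).
  set (N := fun t => area (inter (z t) g)).
  set (S := fun t => area (z t) + area g).
  assert (HSpos : forall t, a <= t <= b -> 0 < S t).
  { intros t Ht. specialize (Hw t Ht). unfold S, z, area at 1; cbn. nra. }
  assert (Hodds : forall t, a <= t <= b -> IoU (z t) g = odds (N t / S t))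
    by (intros; apply IoU_odds, HSpos; assumption).
  destruct (affine_sign_split2 (p0 - b0 g) dp (q0 - b2 g) dq a b ts Hts)
    as [u [v [Hu [Hv [Hp [Hq Hend]]]]]].
  assert (HN : affine_on N u v).
  { destruct (overlap_affine (b0 g) (b2 g) p0 dp q0 dq u v Hp Hq) as [c0 [c1 Hc]].
    exists ((Rmin y3 (b3 g) - Rmax y1 (b1 g)) * c0), ((Rmin y3 (b3 g) - Rmax y1 (b1 g)) * c1).
    intros t Ht. unfold N, z, area, inter; cbn. rewrite (Hc t Ht). ring. }
  assert (HS : affine_on S u v).
  { exists ((y3 - y1) * (q0 - p0) + area g), ((y3 - y1) * (dq - dp)).
    intros t Ht. unfold S, z, area at 1; cbn. ring. }
  assert (Hkink : forall e, e = u \/ e = v -> e = a \/ e = b \/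
            (dp <> 0 /\ p0 + dp * e = b0 g) \/ (dq <> 0 /\ q0 + dq * e = b2 g)).
  { intros e He.
    destruct (Hend e He) as [Ha|[Hb|[[Hdp Hpe]|[Hdq Hqe]]]]; [tauto|tauto| |].
    - right; right; left. split; [exact Hdp|lra].
    - right; right; right. split; [exact Hdq|lra]. }
  destruct (affine_ratio_odds_max_at_end N S u v HN HS
              ltac:(intros; apply HSpos; lra) ts ltac:(lra)) as [E|E].
  - intros t Ht. rewrite <- !Hodds by lra. apply Hmax. lra.
  - exists u. rewrite <- !Hodds in E by lra.
    split; [lra|split; [exact E|apply Hkink; left; reflexivity]].
  - exists v. rewrite <- !Hodds in E by lra.
    split; [lra|split; [exact E|apply Hkink; right; reflexivity]].
Qed.

Definition axis_feasible (Lc Uc Ls Us p q : R) : Prop :=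
  Lc <= p + q <= Uc /\ Ls <= q - p <= Us.

Ltac solve_In_Paxis :=
  unfold Paxis, Pc, Pint, Pgt; cbn [app In];
  solve [repeat first [left; f_equal; lra | right]].

Section Axis.

Variables (Lc Uc Ls Us y1 y3 v : R) (g : box).
Hypotheses (HLs : 0 <= Ls) (Hg : 0 < area g) (Hy : y1 <= y3).

Local Notation J p q := (IoU (mkbox p y1 q y3) g).
Local Notation feasible := (axis_feasible Lc Uc Ls Us).
Local Notation candidates := (Paxis Lc Uc Ls Us (b0 g) (b2 g)).

Hypothesis Hmax : forall p q, feasible p q -> J p q <= v.

Lemma slide_segment (p0 dp q0 dq a b ts : R) : a <= ts <= b ->
  (forall t, a <= t <= b -> feasible (p0 + dp * t) (q0 + dq * t)) ->
  J (p0 + dp * ts) (q0 + dq * ts) = v ->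
  exists e, a <= e <= b /\ J (p0 + dp * e) (q0 + dq * e) = v /\
    (e = a \/ e = b \/ (dp <> 0 /\ p0 + dp * e = b0 g) \/ (dq <> 0 /\ q0 + dq * e = b2 g)).
Proof.
  intros Hts Hfeas Hv. rewrite <- Hv.
  apply IoU_segment_max; try assumption.
  - intros t Ht. destruct (Hfeas t Ht). lra.
  - intros t Ht. rewrite Hv. apply Hmax, Hfeas, Ht.
Qed.

Lemma slide_sum_edge (p q : R) : feasible p q -> p + q = Lc \/ p + q = Uc -> J p q = v ->
  exists p' q', In (p', q') candidates /\ feasible p' q' /\ J p' q' = v.
Proof.
  intros [Hs Hw] Hedge Hv.
  remember (p + q) as s eqn:Es.
  destruct (slide_segment 0 1 s (-1) ((s - Us) / 2) ((s - Ls) / 2) p)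
    as [e [He [Ev Hend]]].
  - lra.
  - intros t Ht. split; lra.
  - replace (0 + 1 * p) with p by ring. replace (s + -1 * p) with q by lra.
    exact Hv.
  - exists (0 + 1 * e), (s + -1 * e). split; [|split; [split; lra|exact Ev]].
    destruct Hend as [He'|[He'|[[_ He']|[_ He']]]]; destruct Hedge as [Hs'|Hs'];
      rewrite Hs' in *; solve_In_Paxis.
Qed.

Lemma slide_left_line (q : R) : feasible (b0 g) q -> J (b0 g) q = v ->
  exists p' q', In (p', q') candidates /\ feasible p' q' /\ J p' q' = v.
Proof.
  intros [Hs Hw] Hv.
  pose proof (Rmax_l (Lc - b0 g) (Ls + b0 g)). pose proof (Rmax_r (Lc - b0 g) (Ls + b0 g)).
  pose proof (Rmin_l (Uc - b0 g) (Us + b0 g)). pose proof (Rmin_r (Uc - b0 g) (Us + b0 g)).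
  set (a := Rmax (Lc - b0 g) (Ls + b0 g)) in *. set (b := Rmin (Uc - b0 g) (Us + b0 g)) in *.
  destruct (slide_segment (b0 g) 0 0 1 a b q) as [e [He [Ev Hend]]].
  - split; [apply Rmax_lub|apply Rmin_glb]; lra.
  - intros t Ht. split; lra.
  - replace (b0 g + 0 * q) with (b0 g) by ring. replace (0 + 1 * q) with q by ring.
    exact Hv.
  - exists (b0 g + 0 * e), (0 + 1 * e). split; [|split; [split; lra|exact Ev]].
    destruct Hend as [->|[->|[[Hd _]|[_ He']]]].
    + destruct (Rmax_or (Lc - b0 g) (Ls + b0 g)) as [E|E]; fold a in E; rewrite E;
        solve_In_Paxis.
    + destruct (Rmin_or (Uc - b0 g) (Us + b0 g)) as [E|E]; fold b in E; rewrite E;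
        solve_In_Paxis.
    + lra.
    + solve_In_Paxis.
Qed.

Lemma slide_right_line (p : R) : feasible p (b2 g) -> J p (b2 g) = v ->
  exists p' q', In (p', q') candidates /\ feasible p' q' /\ J p' q' = v.
Proof.
  intros [Hs Hw] Hv.
  pose proof (Rmax_l (Lc - b2 g) (b2 g - Us)). pose proof (Rmax_r (Lc - b2 g) (b2 g - Us)).
  pose proof (Rmin_l (Uc - b2 g) (b2 g - Ls)). pose proof (Rmin_r (Uc - b2 g) (b2 g - Ls)).
  set (a := Rmax (Lc - b2 g) (b2 g - Us)) in *. set (b := Rmin (Uc - b2 g) (b2 g - Ls)) in *.
  destruct (slide_segment 0 1 (b2 g) 0 a b p) as [e [He [Ev Hend]]].
  - split; [apply Rmax_lub|apply Rmin_glb]; lra.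
  - intros t Ht. split; lra.
  - replace (0 + 1 * p) with p by ring. replace (b2 g + 0 * p) with (b2 g) by ring.
    exact Hv.
  - exists (0 + 1 * e), (b2 g + 0 * e). split; [|split; [split; lra|exact Ev]].
    destruct Hend as [->|[->|[[_ He']|[Hd _]]]].
    + destruct (Rmax_or (Lc - b2 g) (b2 g - Us)) as [E|E]; fold a in E; rewrite E;
        solve_In_Paxis.
    + destruct (Rmin_or (Uc - b2 g) (b2 g - Ls)) as [E|E]; fold b in E; rewrite E;
        solve_In_Paxis.
    + solve_In_Paxis.
    + lra.
Qed.

Lemma max_in_Paxis (p q : R) : feasible p q -> J p q = v ->
  exists p' q', In (p', q') candidates /\ feasible p' q' /\ J p' q' = v.
Proof.
  intros [Hs Hw] Hv.
  remember (q - p) as w eqn:Ew.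
  destruct (slide_segment 0 1 w 1 ((Lc - w) / 2) ((Uc - w) / 2) p)
    as [e [He [Ev Hend]]].
  - lra.
  - intros t Ht. split; lra.
  - replace (0 + 1 * p) with p by ring. replace (w + 1 * p) with q by lra. exact Hv.
  - assert (Hfeas : feasible (0 + 1 * e) (w + 1 * e)) by (split; lra).
    destruct Hend as [He'|[He'|[[_ He']|[_ He']]]].
    + apply (slide_sum_edge _ _ Hfeas); [left; lra|exact Ev].
    + apply (slide_sum_edge _ _ Hfeas); [right; lra|exact Ev].
    + rewrite He' in Hfeas, Ev. exact (slide_left_line _ Hfeas Ev).
    + rewrite He' in Hfeas, Ev. exact (slide_right_line _ Hfeas Ev).
Qed.

End Axis.

Lemma IoU_max_x_in_Px (g L U z : box) :
  0 < area g -> 0 <= b2 L -> 0 <= b3 L ->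
  inF L U z -> (forall z', inF L U z' -> IoU z' g <= IoU z g) ->
  exists z', inF L U z' /\ In (b0 z', b2 z') (Px L U g) /\
    b1 z' = b1 z /\ b3 z' = b3 z /\ IoU z' g = IoU z g.
Proof.
  intros Hg HL2 HL3 Hz Hmax.
  destruct z as [z0 z1 z2 z3]. destruct Hz as [Hs0 [Hs1 [Hw0 Hw1]]]; cbn in *.
  assert (Hmax_x : forall p q, axis_feasible (b0 L) (b0 U) (b2 L) (b2 U) p q ->
                     IoU (mkbox p z1 q z3) g <= IoU (mkbox z0 z1 z2 z3) g).
  { intros p q [Hs Hw]. apply Hmax. unfold inF; cbn. lra. }
  destruct (max_in_Paxis (b0 L) (b0 U) (b2 L) (b2 U) z1 z3 (IoU (mkbox z0 z1 z2 z3) g) g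
              HL2 Hg ltac:(lra) Hmax_x z0 z2) as [p [q [Hin [[Hs Hw] Hv]]]].
  - split; lra.
  - reflexivity.
  - exists (mkbox p z1 q z3). unfold inF; cbn.
    repeat split; solve [assumption | lra].
Qed.

Definition transpose (z : box) : box := mkbox (b1 z) (b0 z) (b3 z) (b2 z).

Lemma transpose_involutive (z : box) : transpose (transpose z) = z.
Proof. destruct z; reflexivity. Qed.

Lemma area_transpose (z : box) : area (transpose z) = area z.
Proof. unfold area; cbn. ring. Qed.

Lemma IoU_transpose (z g : box) : IoU (transpose z) (transpose g) = IoU z g.
Proof.
  unfold IoU. change (inter (transpose z) (transpose g)) with (transpose (inter z g)).
  rewrite !area_transpose. reflexivity.
Qed.

Lemma inF_transpose (L U z : box) :
  inF (transpose L) (transpose U) (transpose z) <-> inF L U z.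
Proof. unfold inF; cbn. tauto. Qed.

Lemma IoU_max_y_in_Py (g L U z : box) :
  0 < area g -> 0 <= b2 L -> 0 <= b3 L ->
  inF L U z -> (forall z', inF L U z' -> IoU z' g <= IoU z g) ->
  exists z', inF L U z' /\ In (b1 z', b3 z') (Py L U g) /\
    b0 z' = b0 z /\ b2 z' = b2 z /\ IoU z' g = IoU z g.
Proof.
  intros Hg HL2 HL3 Hz Hmax.
  destruct (IoU_max_x_in_Px (transpose g) (transpose L) (transpose U) (transpose z))
    as [z' [Hz' [Hin [E1 [E3 Ev]]]]]; try rewrite area_transpose; try assumption.
  - apply inF_transpose, Hz.
  - intros z' Hz'. rewrite <- (transpose_involutive z'), IoU_transpose, IoU_transpose.
    apply Hmax, inF_transpose. rewrite transpose_involutive. exact Hz'.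
  - exists (transpose z').
    split; [|split; [exact Hin|split; [exact E1|split; [exact E3|]]]].
    + apply inF_transpose. rewrite transpose_involutive. exact Hz'.
    + rewrite <- (IoU_transpose (transpose z') g), transpose_involutive, Ev. apply IoU_transpose.
Qed.

Theorem theorem2 (g L U : box) :
  b0 g < b2 g -> b1 g < b3 g ->
  b0 L <= b0 U -> b1 L <= b1 U -> b2 L <= b2 U -> b3 L <= b3 U ->
  0 < b2 L -> 0 < b3 L ->
  forall zstar : box,
    inF L U zstar ->
    (forall z : box, inF L U z -> IoU z g <= IoU zstar g) ->
    exists z' : box, inCs L U g z' /\ inF L U z' /\ IoU z' g = IoU zstar g.
Proof.
  intros Hg02 Hg13 _ _ _ _ HL2 HL3 zstar Hstar Hmax.
  assert (Hg : 0 < area g) by (apply Rmult_lt_0_compat; lra).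
  destruct (IoU_max_x_in_Px g L U zstar Hg ltac:(lra) ltac:(lra) Hstar Hmax)
    as [z1 [Hz1 [Hx [_ [_ Ev1]]]]].
  destruct (IoU_max_y_in_Py g L U z1 Hg ltac:(lra) ltac:(lra) Hz1)
    as [z2 [Hz2 [Hy [E0 [E2 Ev2]]]]].
  { intros z Hz. rewrite Ev1. apply Hmax, Hz. }
  exists z2. split; [|split; [exact Hz2|congruence]].
  unfold inCs. rewrite E0, E2.
  exact (conj (in_map fst _ _ Hx) (conj (in_map fst _ _ Hy)
           (conj (in_map snd _ _ Hx) (in_map snd _ _ Hy)))).
Qed.
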